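(* Let $\Sigma$ be a finite group, let $f\colon A\to B$ be a difference homomorphism of difference rings, $X=\operatorname{PSpec}A$, $Y=\operatorname{PSpec}B$, and $f^*_\Sigma\colon Y\to X$, $\mathfrak q\mapsto f^{-1}(\mathfrak q)$. Then: (1) if for some $s\in A$ and $u\in B$ the map $\operatorname{Spec}B_{f(s)u}\to\operatorname{Spec}A_s$ induced by $f$ is surjective, then $f^*_\Sigma$ maps $Y_{f(s)u}$ onto $X_s$; (2) if for some $s\in A$ the map $\operatorname{Spec}B_{f(s)}\to\operatorname{Spec}A_s$ induced by $f$ has the going-up property, then $f^*_\Sigma\colon Y_{f(s)}\to X_s$ has the going-up property; (3) if for some $s\in A$ and $u\in B$ the map $\operatorname{Spec}B_{f(s)u}\to\operatorname{Spec}A_s$ induced by $f$ has the going-down property, then $f^*_\Sigma\colon Y_{f(s)u}\to X_s$ has the going-down property.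
   Context: A difference ring is a commutative ring with identity with an action of the group $\Sigma$ by ring automorphisms; a difference homomorphism is a unital ring homomorphism commuting with the actions; a difference ideal is a $\Sigma$-stable ideal. A difference ideal $\mathfrak q$ is pseudoprime if there is a multiplicatively closed $S\ni1$ such that $\mathfrak q$ is maximal among difference ideals not meeting $S$; $\operatorname{PSpec}A$ is the set of pseudoprime ideals, and for $s\in A$, $X_s$ denotes the set of pseudoprime ideals of $A$ not containing $s$ (similarly $Y_t$ for $t\in B$). Contractions of pseudoprime ideals under difference homomorphisms are pseudoprime. A map $g\colon\operatorname{Spec}B'\to\operatorname{Spec}A'$ (contraction along $A'\to B'$) has the going-up property if for every chain of primes $\mathfrak p_1\subseteq\dots\subseteq\mathfrak p_n$ of $A'$ and every chain $\mathfrak q_1\subseteq\dots\subseteq\mathfrak q_m$ ($0<m<n$) of primes of $B'$ with $\mathfrak q_i^c=\mathfrak p_i$, the latter chain extends to $\mathfrak q_1\subseteq\dots\subseteq\mathfrak q_n$ with $\mathfrak q_i^c=\mathfrak p_i$ for all $i$; going-down is defined in the same way with all inclusions reversed. For subsets $Y'\subseteq Y$, $X'\subseteq X$ with $f^*_\Sigma(Y')\subseteq X'$, the map $f^*_\Sigma\colon Y'\to X'$ has the going-up (resp. going-down) property if the same condition holds with all chains consisting of pseudoprime ideals, the chains of $A$ lying in $X'$ and the chains of $B$ (including the extended ones) lying in $Y'$. *)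

From HB Require Import structures.
From mathcomp Require Import all_boot all_order all_algebra all_fingroup.
Set Implicit Arguments. Unset Strict Implicit. Unset Printing Implicit Defensive.
Import GRing.Theory.
Local Open Scope ring_scope.

Definition subset_p {T : Type} (I J : T -> Prop) : Prop := forall x, I x -> J x.
Definition same_p {T : Type} (I J : T -> Prop) : Prop := forall x, I x <-> J x.

Definition contr {A B : Type} (f : A -> B) (Q : B -> Prop) : A -> Prop :=
  fun x => Q (f x).

Definition is_ideal (R : comPzRingType) (I : R -> Prop) : Prop :=
  [/\ I 0, (forall x y, I x -> I y -> I (x + y)) & (forall r x, I x -> I (r * x))].

Definition is_prime_ideal (R : comPzRingType) (P : R -> Prop) : Prop :=
  [/\ is_ideal P, ~ P 1 & (forall x y, P (x * y) -> P x \/ P y)].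

(* An action of the (finite) group gT on R by ring automorphisms:
   each sigma acts by a ring endomorphism, 1 acts trivially and the
   action is compatible with the product (hence each sigma acts bijectively). *)
Definition is_diff_action (gT : finGroupType) (R : comPzRingType)
  (act : gT -> R -> R) : Prop :=
  [/\ (forall g x y, act g (x + y) = act g x + act g y),
      (forall g x y, act g (x * y) = act g x * act g y),
      (forall g, act g 1 = 1),
      (forall x, act 1%g x = x) &
      (forall g h x, act (g * h)%g x = act g (act h x))].

Definition is_diff_hom (gT : finGroupType) (A B : comPzRingType)
  (actA : gT -> A -> A) (actB : gT -> B -> B) (f : {rmorphism A -> B}) : Prop :=
  forall g x, f (actA g x) = actB g (f x).

Definition is_diff_ideal (gT : finGroupType) (R : comPzRingType)
  (act : gT -> R -> R) (I : R -> Prop) : Prop :=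
  is_ideal I /\ (forall g x, I x -> I (act g x)).

Definition mult_closed_with1 (R : comPzRingType) (S : R -> Prop) : Prop :=
  S 1 /\ (forall x y, S x -> S y -> S (x * y)).

Definition is_pseudoprime (gT : finGroupType) (R : comPzRingType)
  (act : gT -> R -> R) (q : R -> Prop) : Prop :=
  exists S : R -> Prop,
    [/\ mult_closed_with1 S,
        is_diff_ideal act q,
        (forall x, q x -> ~ S x) &
        (forall I, is_diff_ideal act I -> subset_p q I ->
                   (forall x, I x -> ~ S x) -> subset_p I q)].

(* X_s = pseudoprime ideals not containing s. *)
Definition PSpec_basic (gT : finGroupType) (R : comPzRingType)
  (act : gT -> R -> R) (s : R) : (R -> Prop) -> Prop :=
  fun q => is_pseudoprime act q /\ ~ q s.

(* Spec R_s, identified with the primes of R not containing s. *)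
Definition Spec_loc (R : comPzRingType) (s : R) : (R -> Prop) -> Prop :=
  fun p => is_prime_ideal p /\ ~ p s.

(* Ordering used for chains: up = true gives inclusions p_i ⊆ p_(i+1)
   (going-up), up = false gives p_i ⊇ p_(i+1) (going-down). *)
Definition chain_rel {T : Type} (up : bool) (I J : T -> Prop) : Prop :=
  if up then subset_p I J else subset_p J I.

Definition is_chain {T : Type} (up : bool) (c : nat -> T -> Prop) (n : nat) : Prop :=
  forall i, (i.+1 < n)%N -> chain_rel up (c i) (c i.+1).

(* Chains are indexed by 0..n-1 (resp. 0..m-1). *)
Definition going_prop {A B : Type} (up : bool) (f : A -> B)
  (X' : (A -> Prop) -> Prop) (Y' : (B -> Prop) -> Prop) : Prop :=
  forall (n m : nat) (p : nat -> A -> Prop) (q : nat -> B -> Prop),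
    (0 < m)%N -> (m < n)%N ->
    is_chain up p n -> (forall i, (i < n)%N -> X' (p i)) ->
    is_chain up q m -> (forall i, (i < m)%N -> Y' (q i)) ->
    (forall i, (i < m)%N -> same_p (contr f (q i)) (p i)) ->
    exists q' : nat -> B -> Prop,
      [/\ (forall i, (i < m)%N -> same_p (q' i) (q i)),
          is_chain up q' n,
          (forall i, (i < n)%N -> Y' (q' i)) &
          (forall i, (i < n)%N -> same_p (contr f (q' i)) (p i))].

Definition going_up {A B : Type} := @going_prop A B true.
Definition going_down {A B : Type} := @going_prop A B false.

Definition maps_into {A B : Type} (f : A -> B)
  (X' : (A -> Prop) -> Prop) (Y' : (B -> Prop) -> Prop) : Prop :=
  forall Q, Y' Q -> X' (contr f Q).

Definition maps_onto {A B : Type} (f : A -> B)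
  (X' : (A -> Prop) -> Prop) (Y' : (B -> Prop) -> Prop) : Prop :=
  maps_into f X' Y' /\ (forall P, X' P -> exists2 Q, Y' Q & same_p (contr f Q) P).

From HB Require Import structures.
From mathcomp Require Import all_boot all_order all_algebra all_fingroup.
From mathcomp Require Import boolp classical_sets.
From Stdlib Require Import Classical.
From mathcomp Require Import ring zify.
Import GRing.Theory.
Local Open Scope ring_scope.
Set Implicit Arguments.
Unset Strict Implicit.

(* Pseudoprime ideals are exactly the cores of primes, the intersections of
   the finitely many Sigma-conjugates of a prime.  As Sigma is finite, prime
   avoidance shows that primes with comparable cores have comparable
   conjugates, so chains of pseudoprimes lift to chains of primes; and cores
   commute with contraction along a difference homomorphism.  Each property
   of Spec is thus transported to PSpec by lifting to primes, applying the
   hypothesis there and taking cores again. *)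


Lemma same_p_refl (T : Type) (p : T -> Prop) : same_p p p.
Proof. by []. Qed.

Lemma same_p_sym (T : Type) (p q : T -> Prop) : same_p p q -> same_p q p.
Proof. by move=> pq x; split=> /pq. Qed.

Lemma same_p_trans (T : Type) (p q r : T -> Prop) :
  same_p p q -> same_p q r -> same_p p r.
Proof. by move=> pq qr x; split=> [/pq/qr|/qr/pq]. Qed.

Lemma ideal_mulr (R : comPzRingType) (I : R -> Prop) x y :
  is_ideal I -> I x -> I (x * y).
Proof. by case=> _ _ IM Ix; rewrite mulrC; apply: IM. Qed.

Section PrimeAvoidingMultClosed.
Variables (R : comPzRingType) (S : R -> Prop).
Hypothesis S_mult : mult_closed_with1 S.

Lemma maximal_avoiding_prime (a : R -> Prop) :
  is_ideal a -> (forall x, a x -> ~ S x) ->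
  (forall b, is_ideal b -> subset_p a b -> (forall x, b x -> ~ S x) ->
     subset_p b a) ->
  is_prime_ideal a.
Proof.
case: S_mult => S1 SM [a0 aD aM] aS amax.
have meetS t : ~ a t -> exists c r, a c /\ S (c + r * t).
  move=> nat; apply: NNPP => noS; apply: nat.
  pose b z := exists c r, a c /\ z = c + r * t.
  apply: (amax b); last by exists 0, 1; rewrite mul1r add0r.
  - split; first by exists 0, 0; rewrite mul0r addr0.
      move=> _ _ [c [r [ac ->]]] [c' [r' [ac' ->]]].
      by exists (c + c'), (r + r'); rewrite mulrDl addrACA; split=> //; apply: aD.
    move=> v _ [c [r [ac ->]]]; exists (v * c), (v * r).
    by rewrite mulrDr mulrA; split=> //; apply: aM.
  - by move=> z az; exists z, 0; rewrite mul0r addr0.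
  - by move=> _ [c [r [ac ->]]] Sz; apply: noS; exists c, r.
split=> [|/aS//|x y axy]; first by split.
apply: NNPP => /not_or_and [nx ny].
have [c1 [r1 [ac1 S1x]]] := meetS x nx.
have [c2 [r2 [ac2 S2y]]] := meetS y ny.
apply: (aS _ _ (SM _ _ S1x S2y)).
have -> : (c1 + r1 * x) * (c2 + r2 * y) =
          ((c2 + r2 * y) * c1 + (r1 * x) * c2) + (r1 * r2) * (x * y) by ring.
by apply: (aD); [apply: (aD); apply: (aM) | apply: (aM)].
Qed.

Local Open Scope classical_set_scope.

Lemma ideal_bigcup_chain (F : set (set R)) :
  (exists2 I, F I & I !=set0) -> (forall I x, F I -> I x -> is_ideal I) ->
  total_on F subset -> is_ideal (\bigcup_(I in F) I).
Proof.
move=> [I0 FI0 [x0 I0x0]] Fid Ftot; split.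
- by exists I0 => //; case: (Fid _ _ FI0 I0x0).
- move=> x y [I FI Ix] [J FJ Jy].
  have [IJ|JI] := Ftot _ _ FI FJ.
  + by exists J => //; case: (Fid _ _ FJ Jy) => _ + _; apply; first exact: IJ.
  + by exists I => //; case: (Fid _ _ FI Ix) => _ + _; apply; last exact: JI.
- by move=> r x [I FI Ix]; exists I => //; case: (Fid _ _ FI Ix) => _ _; apply.
Qed.

(* Zorn's lemma is applied to the ideals over [q] avoiding [S] together with
   the empty set, which is the union of the empty chain. *)
Lemma exists_prime_avoiding (q : R -> Prop) :
  is_ideal q -> (forall x, q x -> ~ S x) ->
  exists p, [/\ is_prime_ideal p, subset_p q p & forall x, p x -> ~ S x].
Proof.
move=> qI qS.
pose good (I : set R) := [/\ is_ideal I, subset_p q I & forall x, I x -> ~ S x].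
have [p [[p0|gp] pmax]] : exists p, (p = set0 \/ good p) /\
    forall b, p `<` b -> ~ (b = set0 \/ good b).
- apply: Zorn_bigcup => F Fgood Ftot.
  have good_of J y : F J -> J y -> good J.
    by move=> FJ Jy; case: (Fgood _ FJ) => // J0; rewrite J0 in Jy.
  have [[I0 FI0 [x I0x]]|Fempty] := pselect (exists2 I, F I & I !=set0).
  + have [_ qI0 _] := good_of _ _ FI0 I0x.
    right; split.
    * apply: ideal_bigcup_chain => // [|J y FJ Jy]; first by exists I0 => //; exists x.
      by case: (good_of _ _ FJ Jy).
    * by move=> y qy; exists I0 => //; apply: qI0.
    * by move=> y [J FJ Jy]; have [_ _] := good_of _ _ FJ Jy; apply.
  + left; apply/seteqP; split=> // y [J FJ Jy].
    by apply: Fempty; exists J => //; exists y.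
- case: (pmax q); last by right; split.
  rewrite p0; split=> // qsub; case: qI => q0 _ _; exact: qsub _ q0.
exists p; case: gp => pI qp pS; split=> //.
apply: (maximal_avoiding_prime pI pS) => b bI pb bS.
apply: contrapT => nbp; apply: (pmax b); first by split.
by right; split=> // y /qp /pb.
Qed.

End PrimeAvoidingMultClosed.

Lemma chain_rel_refl (T : Type) up (a : T -> Prop) : chain_rel up a a.
Proof. by case: up. Qed.

Lemma chain_rel_trans (T : Type) up (a b c : T -> Prop) :
  chain_rel up a b -> chain_rel up b c -> chain_rel up a c.
Proof. by case: up => ab bc x => [/ab/bc|/bc/ab]. Qed.

Lemma chain_rel_same (T : Type) up (a a' b b' : T -> Prop) :
  same_p a a' -> same_p b b' -> chain_rel up a b -> chain_rel up a' b'.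
Proof. by case: up => aa bb ab x /= => [/aa/ab/bb|/bb/ab/aa]. Qed.

Lemma is_chain_rel (T : Type) up (c : nat -> T -> Prop) n i j :
  is_chain up c n -> (i <= j < n)%N -> chain_rel up (c i) (c j).
Proof.
move=> chc /andP[]; elim: j => [|j IHj].
  by rewrite leqn0 => /eqP-> _; apply: chain_rel_refl.
rewrite leq_eqVlt => /orP[/eqP->|ij] jn; first exact: chain_rel_refl.
by apply: chain_rel_trans (IHj ij (ltnW jn)) (chc j jn).
Qed.

Definition chain_splice (T : Type) (c d : nat -> T) (k : nat) : nat -> T :=
  fun i => if (i <= k)%N then c i else d (i - k)%N.

Lemma is_chain_splice (T : Type) up (c d : nat -> T -> Prop) k N :
  is_chain up c k.+1 -> is_chain up d N.+1 -> chain_rel up (c k) (d 1%N) ->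
  is_chain up (chain_splice c d k) (k + N.+1).
Proof.
move=> chc chd cd i iN; rewrite /chain_splice.
case: (leqP i.+1 k) => [ik|ki]; first by rewrite ltnW //; apply: chc.
case: (leqP i k) => [ik|ki'].
  have -> : i = k by lia.
  by rewrite subSnn.
by rewrite subSn //; apply: chd; lia.
Qed.

Section Core.
Variables (gT : finGroupType) (R : comPzRingType) (act : gT -> R -> R).
Hypothesis act_diff : is_diff_action act.

(* [conjp g p] is [sigma_g^-1(p)]; [core p], the intersection of these, is
   the largest difference ideal inside [p]. *)
Definition conjp (g : gT) (p : R -> Prop) : R -> Prop := fun x => p (act g x).
Definition core (p : R -> Prop) : R -> Prop := fun x => forall g, p (act g x).

Lemma dact0 g : act g 0 = 0.
Proof.
case: act_diff => actD _ _ _ _; apply: (addrI (act g 0)).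
by rewrite -actD !addr0.
Qed.

Lemma dact_id x : act 1%g x = x.
Proof. by case: act_diff. Qed.

Lemma dactK g x : act g (act g^-1 x) = x.
Proof. by case: act_diff => _ _ _ act1 actM; rewrite -actM mulgV act1. Qed.

Lemma conjp_id p : same_p (conjp 1 p) p.
Proof. by move=> x; rewrite /conjp dact_id. Qed.

Lemma ideal_conjp g p : is_ideal p -> is_ideal (conjp g p).
Proof.
case=> p0 pD pM; case: act_diff => actD actM _ _ _; split.
- by rewrite /conjp dact0.
- by move=> x y; rewrite /conjp actD; apply: pD.
- by move=> r x; rewrite /conjp actM; apply: pM.
Qed.

Lemma prime_conjp g p : is_prime_ideal p -> is_prime_ideal (conjp g p).
Proof.
case=> pI p1 pP; case: act_diff => _ actM act1 _ _; split.
- exact: ideal_conjp.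
- by rewrite /conjp act1.
- by move=> x y; rewrite /conjp actM; apply: pP.
Qed.

Lemma chain_rel_conjp up g p q :
  chain_rel up p q -> chain_rel up (conjp g p) (conjp g q).
Proof. by case: up => pq x; apply: pq. Qed.

Lemma core_sub p : subset_p (core p) p.
Proof. by move=> x /(_ 1%g); rewrite dact_id. Qed.

Lemma core_conjp g p : same_p (core (conjp g p)) (core p).
Proof.
case: act_diff => _ _ _ _ actM x; split=> px h; last by rewrite /conjp -actM.
by have := px (g^-1 * h)%g; rewrite /conjp -actM mulKVg.
Qed.

Lemma core_same p q : same_p p q -> same_p (core p) (core q).
Proof. by move=> pq x; split=> px g; apply/pq. Qed.

Lemma chain_rel_core up p q : chain_rel up p q -> chain_rel up (core p) (core q).
Proof. by case: up => pq x px g; apply: pq. Qed.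

Lemma diff_ideal_core p : is_ideal p -> is_diff_ideal act (core p).
Proof.
case=> p0 pD pM; case: act_diff => actD actM _ _ actMg; split; first split.
- by move=> g; rewrite dact0.
- by move=> x y px py g; rewrite actD; apply: pD.
- by move=> r x px g; rewrite actM; apply: pM.
- by move=> g x px h; rewrite -actMg.
Qed.

(* The multiplicative set witnessing pseudoprimality is the complement of [p]. *)
Lemma pseudoprime_core p q :
  is_prime_ideal p -> same_p q (core p) -> is_pseudoprime act q.
Proof.
move=> [pI p1 pP] qp; have [[c0 cD cM] cS] := diff_ideal_core pI.
exists (fun x => ~ p x); split.
- by split=> // x y px py /pP [].
- split; first split.
  + exact/qp.
  + by move=> x y /qp cx /qp cy; apply/qp; apply: cD.
  + by move=> r x /qp cx; apply/qp; apply: cM.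
  + by move=> g x /qp cx; apply/qp; apply: cS.
- by move=> x /qp /core_sub px; apply.
- move=> I [_ IS] _ Ip x Ix; apply/qp => g.
  by apply: NNPP; apply: Ip; apply: IS.
Qed.

Lemma pseudoprime_ideal q : is_pseudoprime act q -> is_ideal q.
Proof. by case=> S [_ []]. Qed.

Lemma pseudoprime_core_prime q :
  is_pseudoprime act q -> exists2 p, is_prime_ideal p & same_p q (core p).
Proof.
move=> [S [Smult [qI qS] qSd qmax]].
have [p [pP qp pSd]] := exists_prime_avoiding Smult qI qSd.
have q_core : subset_p q (core p) by move=> x qx g; apply/qp/qS.
exists p => // x; split; first exact: q_core.
apply: qmax => //; first by apply: diff_ideal_core; case: pP.
by move=> y /core_sub /pSd.
Qed.

Lemma pseudoprime_core_prime_avoid q s :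
  is_pseudoprime act q -> ~ q s ->
  exists p, [/\ is_prime_ideal p, ~ p s & same_p q (core p)].
Proof.
move=> qP qs; have [p pP qp] := pseudoprime_core_prime qP.
have [g pg] : exists g, ~ p (act g s).
  by apply: not_all_ex_not => ps; apply/qs/qp.
exists (conjp g p); split=> //; first exact: prime_conjp.
exact: same_p_trans qp (same_p_sym (core_conjp g p)).
Qed.

(* Prime avoidance: otherwise the product over Sigma of witnesses
   [x g \in conjp g p, x g \notin r] would lie in [core p], hence in [r]. *)
Lemma core_sub_prime p r :
  is_ideal p -> is_prime_ideal r -> subset_p (core p) r ->
  exists g, subset_p (conjp g p) r.
Proof.
move=> [_ _ pM] [_ r1 rP] pr; apply: NNPP => none.
have witness g : exists y, conjp g p y /\ ~ r y.
  apply: NNPP => nx; apply: none; exists g => y py.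
  by apply: NNPP => ry; apply: nx; exists y.
have [x xp] := choice witness.
have : r (\prod_(g <- index_enum gT) x g).
  apply: pr => h; case: act_diff => _ actM act1 _ _.
  rewrite (big_morph (act h) (actM h) (act1 h)).
  rewrite (bigD1_seq h) ?mem_index_enum ?index_enum_uniq //= mulrC.
  by apply: pM; case: (xp h).
elim: (index_enum gT) => [|g s IHs]; first by rewrite big_nil.
by rewrite big_cons => /rP [|//]; case: (xp g).
Qed.

Lemma chain_rel_conjp_prime up r p :
  is_prime_ideal r -> is_prime_ideal p -> chain_rel up (core r) (core p) ->
  exists g, chain_rel up r (conjp g p).
Proof.
move=> rP pP; have [[rI _ _] [pI _ _]] := (rP, pP).
case: up => /= rp.
  have [g gr] := core_sub_prime rI pP (fun x rx => core_sub (rp x rx)).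
  by exists g^-1%g => x rx; apply: gr; rewrite /conjp dactK.
exact: core_sub_prime pI rP (fun x px => core_sub (rp x px)).
Qed.

Lemma lift_pseudoprime_chain up N (P : nat -> R -> Prop) r :
  is_chain up P N.+1 -> (forall i, (i <= N)%N -> is_pseudoprime act (P i)) ->
  is_prime_ideal r -> same_p (core r) (P 0%N) ->
  exists r' : nat -> R -> Prop,
    [/\ r' 0%N = r, is_chain up r' N.+1 &
        forall i, (i <= N)%N -> is_prime_ideal (r' i) /\ same_p (core (r' i)) (P i)].
Proof.
elim: N P r => [|N IHN] P r chP Ppp rP rP0.
  by exists (fun _ => r); split=> // -[].
have [p pP Pp] := pseudoprime_core_prime (Ppp 1%N isT).
have [g rg] := chain_rel_conjp_prime rP pP
  (chain_rel_same (same_p_sym rP0) Pp (chP 0%N isT)).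
have [r' [r'0 chr' r'P]] := IHN (fun i => P i.+1) (conjp g p)
  (fun i => chP i.+1) (fun i => Ppp i.+1) (prime_conjp g pP)
  (same_p_trans (core_conjp g p) (same_p_sym Pp)).
exists (fun i => if i is j.+1 then r' j else r); split=> //.
- by case=> [|i] iN /=; [rewrite r'0 | apply: chr'].
- by case=> [|i] iN; [split | apply: r'P].
Qed.

End Core.

Lemma prime_contr (A B : comPzRingType) (f : {rmorphism A -> B}) Q :
  is_prime_ideal Q -> is_prime_ideal (contr f Q).
Proof.
case=> -[Q0 QD QM] Q1 QP; split; first split.
- by rewrite /contr rmorph0.
- by move=> x y; rewrite /contr rmorphD; apply: QD.
- by move=> r x; rewrite /contr rmorphM; apply: QM.
- by rewrite /contr rmorph1.
- by move=> x y; rewrite /contr rmorphM; apply: QP.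
Qed.

Section Contraction.
Variables (gT : finGroupType) (A B : comPzRingType).
Variables (actA : gT -> A -> A) (actB : gT -> B -> B) (f : {rmorphism A -> B}).
Hypotheses (actA_diff : is_diff_action actA) (actB_diff : is_diff_action actB).
Hypothesis f_diff : is_diff_hom actA actB f.

Lemma contr_core Q : same_p (contr f (core actB Q)) (core actA (contr f Q)).
Proof. by move=> x; rewrite /contr /core; split=> Qx g; rewrite ?f_diff // -f_diff. Qed.

Lemma contr_conjp g Q :
  same_p (contr f (conjp actB g Q)) (conjp actA g (contr f Q)).
Proof. by move=> x; rewrite /contr /conjp f_diff. Qed.

Lemma maps_into_PSpec s u :
  maps_into f (PSpec_basic actA s) (PSpec_basic actB (f s * u)).
Proof.
move=> Q [QP Qs]; have [Q' Q'P QQ'] := pseudoprime_core_prime actB_diff QP.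
split; last by move=> fs; apply: Qs; apply: ideal_mulr (pseudoprime_ideal QP) fs.
apply: (pseudoprime_core (q := contr f Q) actA_diff (prime_contr f Q'P)).
by apply: same_p_trans (contr_core Q'); move=> x; apply: QQ'.
Qed.

Lemma maps_onto_PSpec s u :
  maps_onto f (Spec_loc s) (Spec_loc (f s * u)) ->
  maps_onto f (PSpec_basic actA s) (PSpec_basic actB (f s * u)).
Proof.
move=> [_ onto]; split=> [|P [PP Ps]]; first exact: maps_into_PSpec.
have [p [pP ps Pp]] := pseudoprime_core_prime_avoid actA_diff PP Ps.
have [Q [QP Qt] Qp] := onto p (conj pP ps).
exists (core actB Q).
  split; last by move/(core_sub actB_diff).
  exact: (pseudoprime_core actB_diff QP (same_p_refl _)).
apply: same_p_trans (contr_core Q) _.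
by move=> x; rewrite (Pp x); split=> Qx g; apply/Qp/Qx.
Qed.

(* What the going-up/down hypothesis on spectra needs to extend a chain of
   pseudoprimes of [A] lying under [core Q]: a chain of primes with the same
   cores, starting at the contraction of a conjugate of [Q]. *)
Definition lifts_pseudoprime_chains up (s : A) (t : B) : Prop :=
  forall N (P : nat -> A -> Prop) (Q : B -> Prop),
    is_chain up P N.+1 -> (forall i, (i <= N)%N -> PSpec_basic actA s (P i)) ->
    is_prime_ideal Q -> ~ Q t -> same_p (core actA (contr f Q)) (P 0%N) ->
    exists g (r : nat -> A -> Prop),
      [/\ Spec_loc t (conjp actB g Q), same_p (contr f (conjp actB g Q)) (r 0%N),
          is_chain up r N.+1, (forall i, (i <= N)%N -> Spec_loc s (r i)) &
          forall i, (i <= N)%N -> same_p (core actA (r i)) (P i)].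

(* Only the last ideal of the given chain in [B] is lifted to a prime; the
   extension is spliced from the cores of the primes the hypothesis on
   spectra provides. *)
Lemma going_PSpec_of_lift up s t :
  going_prop up f (Spec_loc s) (Spec_loc t) -> lifts_pseudoprime_chains up s t ->
  going_prop up f (PSpec_basic actA s) (PSpec_basic actB t).
Proof.
move=> going lifts n [//|k] P Q _ kn chP XP chQ YQ QP.
have [N defn] : exists N, n = (k + N.+1)%N by exists (n - k.+1)%N; lia.
subst n; have [YQkP YQkt] := YQ k (ltnSn k).
have [Q1 [Q1P Q1t QQ1]] := pseudoprime_core_prime_avoid actB_diff YQkP YQkt.
have Q1Pk : same_p (core actA (contr f Q1)) (P (k + 0)%N).
  move=> x; rewrite addn0 -(QP k (ltnSn k) x) /contr (QQ1 (f x)).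
  exact: iff_sym (contr_core Q1 x).
have chPk : is_chain up (fun i => P (k + i)%N) N.+1.
  by move=> i iN; rewrite addnS; apply: chP; lia.
have XPk i : (i <= N)%N -> PSpec_basic actA s (P (k + i)%N) by move=> iN; apply: XP; lia.
have [g [r [Yg gr chr Xr rP]]] := lifts N _ Q1 chPk XPk Q1P Q1t Q1Pk.
have [q [q0 chq Yq qr]] := going N.+1 1%N r (fun _ => conjp actB g Q1) isT
  ltac:(lia) chr Xr (fun _ _ => chain_rel_refl _ _) (fun _ _ => Yg) ltac:(by case).
exists (chain_splice Q (fun j => core actB (q j)) k); split.
- by move=> i ik; rewrite /chain_splice -ltnS ik.
- apply: is_chain_splice => //.
    by move=> i iN /=; apply: chain_rel_core; apply: chq.
  have q0Qk : same_p (core actB (q 0%N)) (Q k).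
    apply: same_p_trans (core_same actB (q0 0%N isT)) _.
    exact: same_p_trans (core_conjp actB_diff g Q1) (same_p_sym QQ1).
  exact: (chain_rel_same q0Qk (same_p_refl _)
            (chain_rel_core actB (chq 0%N ltac:(lia)))).
- move=> i iN; rewrite /chain_splice; case: leqP => ik; first exact: YQ.
  have [qP qt] := Yq (i - k)%N ltac:(lia).
  split; first exact: (pseudoprime_core actB_diff qP (same_p_refl _)).
  by move/(core_sub actB_diff).
- move=> i iN; rewrite /chain_splice; case: leqP => ik; first exact: QP.
  apply: same_p_trans (contr_core _) _.
  apply: same_p_trans (core_same actA (qr (i - k)%N _)) _; first lia.
  by rewrite -{2}(subnKC (ltnW ik)); apply: rP; lia.
Qed.

Lemma going_down_PSpec s u :
  going_down f (Spec_loc s) (Spec_loc (f s * u)) ->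
  going_down f (PSpec_basic actA s) (PSpec_basic actB (f s * u)).
Proof.
move/going_PSpec_of_lift; apply=> N P Q chP XP QP Qt QPk.
have [r [r0 chr rP]] := lift_pseudoprime_chain actA_diff chP
  (fun i iN => (XP i iN).1) (prime_contr f QP) QPk.
have Qs : ~ contr f Q s.
  by move=> Qfs; apply: Qt; case: QP => QI _ _; exact: ideal_mulr QI Qfs.
exists 1%g, r; split=> //.
- by split; [exact: prime_conjp | move/(conjp_id actB_diff)].
- by rewrite r0 => x; apply: (conjp_id actB_diff).
- move=> i iN; split; first exact: (rP i iN).1.
  by move=> ris; apply: Qs; rewrite -r0; exact: (is_chain_rel (i:=0) (j:=i) chr _ s ris).
- by move=> i iN; case: (rP i iN).
Qed.

(* The chain of primes lifted from [contr f Q] may contain [s]; a single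
   conjugation moves [s] out of its top element, hence out of all of it. *)
Lemma going_up_PSpec s :
  going_up f (Spec_loc s) (Spec_loc (f s)) ->
  going_up f (PSpec_basic actA s) (PSpec_basic actB (f s)).
Proof.
move/going_PSpec_of_lift; apply=> N P Q chP XP QP _ QPk.
have [r [r0 chr rP]] := lift_pseudoprime_chain actA_diff chP
  (fun i iN => (XP i iN).1) (prime_contr f QP) QPk.
have [g rNg] : exists g, ~ r N (actA g s).
  apply: not_all_ex_not => rNs; apply: (XP N (leqnn N)).2.
  exact/((rP N (leqnn N)).2 s).
have below_top i : (i <= N)%N -> ~ r i (actA g s).
  move=> iN ris; have iNN : (i <= N < N.+1)%N by lia.
  exact/rNg/(is_chain_rel chr iNN _ ris).
exists g, (fun i => conjp actA g (r i)); split.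
- split; first exact: prime_conjp.
  by move=> Qgfs; apply: (below_top 0%N isT); rewrite r0 /contr f_diff.
- by rewrite r0; exact: contr_conjp.
- by move=> i iN; apply: chain_rel_conjp; apply: chr.
- by move=> i iN; split; [exact: prime_conjp (rP i iN).1 | exact: below_top].
- move=> i iN; exact: same_p_trans (core_conjp actA_diff g (r i)) (rP i iN).2.
Qed.

End Contraction.

Theorem proposition4p5 (gT : finGroupType) (A B : comPzRingType)
  (actA : gT -> A -> A) (actB : gT -> B -> B) (f : {rmorphism A -> B})
  (hA : is_diff_action actA) (hB : is_diff_action actB)
  (hf : is_diff_hom actA actB f) :
  [/\ (forall (s : A) (u : B),
         maps_onto f (Spec_loc s) (Spec_loc (f s * u)) ->
         maps_onto f (PSpec_basic actA s) (PSpec_basic actB (f s * u))),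
      (forall s : A,
         going_up f (Spec_loc s) (Spec_loc (f s)) ->
         maps_into f (PSpec_basic actA s) (PSpec_basic actB (f s)) /\
         going_up f (PSpec_basic actA s) (PSpec_basic actB (f s))) &
      (forall (s : A) (u : B),
         going_down f (Spec_loc s) (Spec_loc (f s * u)) ->
         maps_into f (PSpec_basic actA s) (PSpec_basic actB (f s * u)) /\
         going_down f (PSpec_basic actA s) (PSpec_basic actB (f s * u)))].
Proof.
split=> [s u|s up|s u down].
- exact: maps_onto_PSpec hA hB hf s u.
- split; first by rewrite -[f s]mulr1; exact: maps_into_PSpec hA hB hf s 1.
  exact: going_up_PSpec hA hB hf s up.
- split; first exact: maps_into_PSpec hA hB hf s u.
  exact: going_down_PSpec hA hB hf s u down.
Qed.
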